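(* Fix $n,m\in\mathbb N$. If $L\subseteq\mathbb R^{nm}$ is an origin-symmetric convex body and $v\in\mathbb S^{n-1}$, then $\bar S_v^*(L^\circ)\subseteq(\bar S_v L)^\circ$.
   Context: Write points of $\mathbb R^{nm}$ as $x=(x_1,\dots,x_m)$ with $x_i\in\mathbb R^n$. For $v\in\mathbb R^n$ put $x^tv=(\langle x_1,v\rangle,\dots,\langle x_m,v\rangle)\in\mathbb R^m$, and for $s=(s_1,\dots,s_m)\in\mathbb R^m$ put $vs^t=(s_1v,\dots,s_mv)\in\mathbb R^{nm}$. For a convex body $L\subseteq\mathbb R^{nm}$ the $m$th-order fiber symmetrization and its adjoint are \[\bar S_vL=\Big\{x+v\big(\tfrac{s-r}{2}\big)^t:\ x^tv=0,\ s,r\in\mathbb R^m,\ x+vs^t\in L,\ x+vr^t\in L\Big\},\] \[\bar S^*_vL=\Big\{\tfrac{x-y}{2}+vs^t:\ x^tv=y^tv=0,\ s\in\mathbb R^m,\ x+vs^t\in L,\ y+vs^t\in L\Big\}.\] $L^\circ=\{z:\langle z,w\rangle\le1\ \forall w\in L\}$ denotes the polar. *)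

From HB Require Import structures.
From mathcomp Require Import all_boot all_order all_algebra.
From mathcomp Require Import all_classical all_reals all_analysis.
Set Implicit Arguments. Unset Strict Implicit. Unset Printing Implicit Defensive.
Import Order.TTheory GRing.Theory Num.Theory.
Import numFieldNormedType.Exports.
Local Open Scope classical_set_scope.
Local Open Scope ring_scope.

(* A point x = (x_1,...,x_m) of R^{nm}, x_i in R^n, is an m x n matrix
   whose i-th row is x_i.  Vectors of R^n and R^m are row vectors. *)

Section FiberSym.
Variables (R : realType) (n m : nat).

Definition xtv (x : 'M[R]_(m, n)) (v : 'rV[R]_n) : 'rV[R]_m :=
  \row_(i < m) \sum_(j < n) x i j * v 0 j.

Definition vst (v : 'rV[R]_n) (s : 'rV[R]_m) : 'M[R]_(m, n) :=
  \matrix_(i < m, j < n) (s 0 i * v 0 j).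

Definition ip (z w : 'M[R]_(m, n)) : R :=
  \sum_(i < m) \sum_(j < n) z i j * w i j.

Definition polar (L : set 'M[R]_(m, n)) : set 'M[R]_(m, n) :=
  [set z | forall w, L w -> ip z w <= 1].

Definition unit_sphere (v : 'rV[R]_n) : Prop :=
  \sum_(j < n) v 0 j ^+ 2 = 1.

Definition convex_set_mx (L : set 'M[R]_(m, n)) : Prop :=
  forall x y (t : R), L x -> L y -> 0 <= t -> t <= 1 ->
    L (t *: x + (1 - t) *: y).

Definition convex_body (L : set 'M[R]_(m, n)) : Prop :=
  [/\ convex_set_mx L, compact L & (L)° !=set0 ].

Definition origin_symmetric (L : set 'M[R]_(m, n)) : Prop :=
  forall x, L x -> L (- x).

Definition fiber_sym (v : 'rV[R]_n) (L : set 'M[R]_(m, n)) : set 'M[R]_(m, n) :=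
  [set z | exists x s r, [/\ xtv x v = 0, L (x + vst v s), L (x + vst v r)
        & z = x + vst v ((2%:R)^-1 *: (s - r))]].

Definition fiber_sym_adj (v : 'rV[R]_n) (L : set 'M[R]_(m, n)) : set 'M[R]_(m, n) :=
  [set z | exists x y s, [/\ xtv x v = 0, xtv y v = 0, L (x + vst v s),
        L (y + vst v s) & z = (2%:R)^-1 *: (x - y) + vst v s]].
End FiberSym.

From HB Require Import structures.
From mathcomp Require Import all_boot all_order all_algebra.
From mathcomp Require Import all_classical all_reals all_analysis.
From mathcomp Require Import ring lra.
Import Order.TTheory GRing.Theory Num.Theory.
Import numFieldNormedType.Exports.
Local Open Scope classical_set_scope.
Local Open Scope ring_scope.

(* Split points as x + v s^t with x^t v = 0.  For unit v this decomposition is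
   orthogonal, so <x + v s^t, y + v t^t> = <x, y> + <s, t>.  For z in the
   adjoint and w in the symmetral this gives
   <z, w> = (<x' + v s^t, x + v a^t> - <y' + v s^t, x + v b^t>) / 2,
   and both inner products are at most 1 by polarity, the second one because
   -(x + v b^t) lies in the symmetric body L. *)

Section InnerProduct.
Variables (R : realType) (n m : nat).
Implicit Types (x y w : 'M[R]_(m, n)) (v : 'rV[R]_n) (s t : 'rV[R]_m).

Lemma ipC x y : ip x y = ip y x.
Proof. by apply: eq_bigr => i _; apply: eq_bigr => j _; rewrite mulrC. Qed.

Lemma ipDl x y w : ip (x + y) w = ip x w + ip y w.
Proof.
rewrite /ip -big_split; apply: eq_bigr => i _; rewrite -big_split.
by apply: eq_bigr => j _; rewrite mxE mulrDl.
Qed.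

Lemma ipZl (k : R) x w : ip (k *: x) w = k * ip x w.
Proof.
rewrite /ip mulr_sumr; apply: eq_bigr => i _; rewrite mulr_sumr.
by apply: eq_bigr => j _; rewrite mxE mulrA.
Qed.

Lemma ipNl x w : ip (- x) w = - ip x w.
Proof. by rewrite -scaleN1r ipZl mulN1r. Qed.

Lemma ipBl x y w : ip (x - y) w = ip x w - ip y w.
Proof. by rewrite ipDl ipNl. Qed.

Lemma ipDr x y w : ip w (x + y) = ip w x + ip w y.
Proof. by rewrite ipC ipDl ![ip _ w]ipC. Qed.

Lemma ipZr (k : R) x w : ip w (k *: x) = k * ip w x.
Proof. by rewrite ipC ipZl ipC. Qed.

Lemma ipNr x w : ip w (- x) = - ip w x.
Proof. by rewrite ipC ipNl ipC. Qed.

Lemma ipBr x y w : ip w (x - y) = ip w x - ip w y.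
Proof. by rewrite ipDr ipNr. Qed.

Lemma ip0l w : ip 0 w = 0.
Proof. by rewrite -(scale0r 0) ipZl mul0r. Qed.

End InnerProduct.

Section FiberDecomposition.
Variables (R : realType) (n m : nat).
Implicit Types (x y : 'M[R]_(m, n)) (v : 'rV[R]_n) (s t : 'rV[R]_m).

(* [ip] on ['rV_m = 'M_(1, m)] is the standard inner product of R^m. *)
Lemma ip_vst_xtv x v t : ip x (vst v t) = ip (xtv x v) t.
Proof.
rewrite /ip big_ord1; apply: eq_bigr => i _.
rewrite !mxE mulr_suml; apply: eq_bigr => j _; rewrite !mxE; ring.
Qed.

Lemma ip_vst_vst v s t : unit_sphere v -> ip (vst v s) (vst v t) = ip s t.
Proof.
move=> v1; rewrite /ip big_ord1; apply: eq_bigr => i _.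
transitivity (s 0 i * t 0 i * \sum_(j < n) v 0 j ^+ 2); last by rewrite v1 mulr1.
by rewrite mulr_sumr; apply: eq_bigr => j _; rewrite !mxE; ring.
Qed.

Lemma xtvE x v : xtv x v = (x *m v^T)^T.
Proof. by apply/rowP => i; rewrite !mxE; apply: eq_bigr => j _; rewrite !mxE. Qed.

Lemma xtv_scaleB (k : R) x y v :
  xtv (k *: (x - y)) v = k *: (xtv x v - xtv y v).
Proof. by rewrite !xtvE -scalemxAl mulmxBl linearZ linearB. Qed.

Lemma ip_fiber v x y s t : unit_sphere v -> xtv x v = 0 -> xtv y v = 0 ->
  ip (x + vst v s) (y + vst v t) = ip x y + ip s t.
Proof.
move=> v1 x0 y0.
rewrite !ipDl !ipDr ip_vst_vst // ip_vst_xtv [ip (vst v s) y]ipC ip_vst_xtv.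
by rewrite x0 y0 !ip0l addr0 add0r.
Qed.

Lemma ip_fiber_sym_adj v x' y' x s a b :
  unit_sphere v -> xtv x' v = 0 -> xtv y' v = 0 -> xtv x v = 0 ->
  ip ((2%:R)^-1 *: (x' - y') + vst v s) (x + vst v ((2%:R)^-1 *: (a - b))) =
  (2%:R)^-1 * (ip (x' + vst v s) (x + vst v a) - ip (y' + vst v s) (x + vst v b)).
Proof.
move=> v1 x'0 y'0 x0.
have xy0 : xtv ((2%:R)^-1 *: (x' - y')) v = 0 by rewrite xtv_scaleB x'0 y'0 subr0 scaler0.
by rewrite !ip_fiber // ipZl ipZr ipBl ipBr -mulrDr addrACA opprD.
Qed.

End FiberDecomposition.

Theorem proposition4p6 (R : realType) (n m : nat) (L : set 'M[R]_(m, n))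
  (v : 'rV[R]_n) :
  convex_body L -> origin_symmetric L -> unit_sphere v ->
  fiber_sym_adj v (polar L) `<=` polar (fiber_sym v L).
Proof.
move=> _ Lsym v1 _ [x' [y' [s [x'0 y'0 polar_x' polar_y' ->]]]].
move=> _ [x [a [b [x0 La Lb ->]]]].
rewrite ip_fiber_sym_adj //.
have := polar_x' _ La; have := polar_y' _ (Lsym _ Lb); rewrite ipNr.
move: (ip _ (x + vst v a)) (ip _ (x + vst v b)) => p q le_q le_p.
by clear -le_p le_q; lra.
Qed.
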